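(* Let $(a,b,c,\lambda,\delta)\in(\mathbb F^\times)^4\times\mathbb F$ and let $\nu\in\mathbb F^\times$ satisfy $\nu^{d'}+\nu^{-d'}=\delta+a^{d'}\lambda^{-d'}+a^{-d'}\lambda^{d'}$. Put $\vartheta_i=\nu^{-1}q^{2i}+\nu q^{-2i}$. Then the characteristic polynomial of $A$ acting on $W_\lambda^\delta(a,b,c)$ is $\prod_{i=0}^{d'-1}(x-\vartheta_i)$, and this equals $\prod_{i=0}^{d'-1}(x-\theta_i)-\delta$.
   Context: $\mathbb F$ is an algebraically closed field and $q\in\mathbb F^\times$ a root of unity of order $d\notin\{1,2,4\}$; $d'=d$ if $d$ odd, $d'=d/2$ if $d$ even. $\triangle_q$ is the unital associative $\mathbb F$-algebra with generators $A,B,C$ subject to: each of $A+\frac{qBC-q^{-1}CB}{q^2-q^{-2}}$, $B+\frac{qCA-q^{-1}AC}{q^2-q^{-2}}$, $C+\frac{qAB-q^{-1}BA}{q^2-q^{-2}}$ is central; $\alpha,\beta,\gamma$ are these times $q+q^{-1}$. For $(a,b,c,\lambda)\in(\mathbb F^\times)^4$, $i\in\mathbb N$: $\theta_i=a\lambda^{-1}q^{2i}+a^{-1}\lambda q^{-2i}$, $\theta_i^*=b\lambda^{-1}q^{2i}+b^{-1}\lambda q^{-2i}$, $\varphi_i=a^{-1}b^{-1}\lambda q(q^i-q^{-i})(\lambda^{-1}q^{i-1}-\lambda q^{1-i})(q^{-i}-abc\lambda^{-1}q^{i-1})(q^{-i}-abc^{-1}\lambda^{-1}q^{i-1})$. $M_\lambda(a,b,c)$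 has basis $\{m_i\}_{i\in\mathbb N}$, $(A-\theta_i)m_i=m_{i+1}$, $(B-\theta_i^* )m_i=\varphi_im_{i-1}$, $\alpha,\beta,\gamma$ acting as $(b+b^{-1})(c+c^{-1})+(a+a^{-1})(\lambda q+\lambda^{-1}q^{-1})$, $(c+c^{-1})(a+a^{-1})+(b+b^{-1})(\lambda q+\lambda^{-1}q^{-1})$, $(a+a^{-1})(b+b^{-1})+(c+c^{-1})(\lambda q+\lambda^{-1}q^{-1})$. $W_\lambda^\delta(a,b,c)$ is the quotient of $M_\lambda(a,b,c)$ by the span of $\{\delta m_i-m_{d'+i}\}_{i\in\mathbb N}$ (dimension $d'$). *)

From HB Require Import structures.
From mathcomp Require Import all_boot all_order all_algebra.
Set Implicit Arguments. Unset Strict Implicit. Unset Printing Implicit Defensive.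
Import GRing.Theory.
Local Open Scope ring_scope.

Definition dprime (d : nat) : nat := if odd d then d else d./2.

Definition theta (F : fieldType) (q a lam : F) (i : nat) : F :=
  a * lam^-1 * q ^+ (2 * i) + a^-1 * lam * q ^- (2 * i).

Definition vtheta (F : fieldType) (q nu : F) (i : nat) : F :=
  nu^-1 * q ^+ (2 * i) + nu * q ^- (2 * i).

(* W = M_lambda(a,b,c) / span{delta m_i - m_{n+i}} with n = d'.  In W the
   image of m_k equals delta^(k div n) * m_(k mod n); [Wcoord n delta k] is the
   coordinate row vector of the class of m_k in the basis (class of m_j)_{j<n}. *)
Definition Wcoord (F : fieldType) (n : nat) (delta : F) (k : nat) : 'rV[F]_n :=
  \row_(j < n) (if (k %% n)%N == j then delta ^+ (k %/ n)%N else 0).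

(* Matrix of A acting on W (row convention: row i = coordinates of A.m_i),
   from (A - theta_i) m_i = m_{i+1} in M, reduced into the quotient W. *)
Definition AonW (F : fieldType) (q a lam delta : F) (n : nat) : 'M[F]_n :=
  \matrix_(i < n) (theta q a lam i *: Wcoord n delta i + Wcoord n delta i.+1).

(* With J(y) = y + 1/y, u = a/lam and w = q^2 (a primitive d'-th root of unity),
   theta_i = J(u w^i) and vartheta_i = J(nu^-1 w^i).  The identity
   J(y) - J(z) = (y - z)(y - 1/z)/y and prod_i (y - z w^i) = y^d' - z^d' give
   prod_i (J(y) - J(u w^i)) = J(y^d') - J(u^d'), so the polynomial
   prod_i (x - J(u w^i)) + J(u^d') does not depend on u: every x is some J(y) in
   the algebraically closed field F.  The hypothesis on nu says exactly that
   J(nu^-d') = delta + J(u^d').  On the other side, A acts on W by a bidiagonal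
   matrix closed up by delta in its corner, and expanding along the first column
   gives prod_i (x - theta_i) - delta. *)

From HB Require Import structures.
From mathcomp Require Import all_boot all_order all_algebra.
From mathcomp Require Import ring.

Set Implicit Arguments.
Unset Strict Implicit.
Unset Printing Implicit Defensive.

Import GRing.Theory.
Local Open Scope ring_scope.

Section BidiagCycle.
Variables (F : fieldType) (t : nat -> F) (delta : F).

Lemma Wcoord_ltn n k (j : 'I_n) :
  (k < n)%N -> Wcoord n delta k 0 j = (k == j :> nat)%:R.
Proof. by move=> lt_kn; rewrite mxE modn_small // divn_small // expr0; case: eqP. Qed.

Lemma Wcoordnn n (j : 'I_n) :
  Wcoord n delta n 0 j = delta *+ (j == 0 :> nat).
Proof.
by rewrite mxE modnn divnn (leq_ltn_trans _ (ltn_ord j)) // expr1 eq_sym; case: eqP.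
Qed.

Definition bidiag_cycle_mx n : 'M[F]_n :=
  \matrix_(i < n) (t i *: Wcoord n delta i + Wcoord n delta i.+1).

Lemma bidiag_cycle_mxE n (i j : 'I_n) :
  bidiag_cycle_mx n i j = t i * Wcoord n delta i 0 j + Wcoord n delta i.+1 0 j.
Proof. by rewrite !mxE. Qed.

Lemma char_poly_mx_bidiag_cycle m (i j : 'I_m.+2) :
  char_poly_mx (bidiag_cycle_mx m.+2) i j =
  if i == j :> nat then 'X - (t i)%:P
  else if i.+1 == j :> nat then -1
  else if (i == m.+1 :> nat) && (j == 0 :> nat) then - delta%:P else 0.
Proof.
rewrite 4!mxE bidiag_cycle_mxE Wcoord_ltn // -val_eqE /=.
have [i_last | i_lt] := eqVneq (i : nat) m.+1.
  rewrite i_last Wcoordnn (gtn_eqF (ltn_ord j)) /=.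
  case: eqP => [<- | _] /=; first by rewrite mulr1 addr0.
  by rewrite mulr0 !add0r; case: (j == 0 :> nat); rewrite ?oppr0.
rewrite Wcoord_ltn; last by rewrite ltnS ltn_neqAle i_lt /= -ltnS ltn_ord.
case: eqP => [<- | _] /=.
  by rewrite (gtn_eqF (ltnSn _)) mulr1 !mulr1n mulr0n addr0.
by rewrite !mulr0n mulr0 !add0r; case: eqP; rewrite ?mulr1n ?oppr0.
Qed.

Lemma char_poly_bidiag_cycle_ge2 m :
  char_poly (bidiag_cycle_mx m.+2) = \prod_(i < m.+2) ('X - (t i)%:P) - delta%:P.
Proof.
rewrite /char_poly; move: (char_poly_mx _) (@char_poly_mx_bidiag_cycle m) => B BE.
have cof00 : cofactor B ord0 ord0 = \prod_(i < m.+1) ('X - (t i.+1)%:P).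
  rewrite /cofactor addn0 expr0 mul1r -det_tr det_trig.
    by apply: eq_bigr => i _; rewrite !mxE BE !lift0 eqxx.
  apply/is_trig_mxP => i j lt_ij; rewrite !mxE BE !lift0 !eqSS (gtn_eqF lt_ij).
  by rewrite (gtn_eqF (leqW lt_ij)) andbF.
have cof_last0 : cofactor B ord_max ord0 = 1.
  rewrite /cofactor det_trig.
    rewrite (eq_bigr (fun=> -1)) => [|i _]; last first.
      by rewrite !mxE BE lift_max lift0 (ltn_eqF (ltnSn _)) eqxx.
    by rewrite prodr_const card_ord addn0 /= -exprMn mulrNN mulr1 expr1n.
  apply/is_trig_mxP => i j lt_ij; rewrite !mxE BE lift_max lift0 eqSS (ltn_eqF lt_ij).
  by rewrite (ltn_eqF (leqW lt_ij)) (ltn_eqF (ltn_ord i)).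
rewrite (expand_det_col _ ord0) [in LHS]big_ord_recl [in LHS]big_ord_recr /=.
rewrite big1 => [|i _]; last by rewrite BE lift0 /= eqSS (ltn_eqF (ltn_ord i)) mul0r.
have -> : lift ord0 (@ord_max m) = ord_max by apply: val_inj.
by rewrite cof00 cof_last0 !BE /= eqxx add0r mulr1 [in RHS]big_ord_recl.
Qed.

Lemma char_poly_bidiag_cycle n :
  char_poly (bidiag_cycle_mx n.+1) = \prod_(i < n.+1) ('X - (t i)%:P) - delta%:P.
Proof.
case: n => [|m]; last exact: char_poly_bidiag_cycle_ge2.
rewrite /char_poly det_mx11 4!mxE bidiag_cycle_mxE Wcoord_ltn // Wcoordnn big_ord1.
by rewrite /= !mulr1n mulr1 polyCD opprD addrA.
Qed.
End BidiagCycle.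

Definition joukowski {F : fieldType} (x : F) : F := x + x^-1.

Section Joukowski.
Variable F : fieldType.
Implicit Types (u w x y : F) (n : nat).

Lemma joukowskiV x : joukowski x^-1 = joukowski x.
Proof. by rewrite /joukowski invrK addrC. Qed.

Lemma joukowski_sub y x : y != 0 -> x != 0 ->
  joukowski y - joukowski x = (y - x) * (y - x^-1) / y.
Proof. by move=> y0 x0; rewrite /joukowski; field; apply/andP. Qed.

Lemma prim_rootV n w : n.-primitive_root w -> n.-primitive_root w^-1.
Proof.
move=> pw; have n_gt0 := prim_order_gt0 pw.
have w0 : w != 0 by rewrite (prim_root_eq0 pw) -lt0n.
have -> : w^-1 = w ^+ n.-1.
  by apply: (mulIf w0); rewrite mulVf // -exprSr prednK // prim_expr_order.
by rewrite prim_root_exp_coprime // coprimePn.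
Qed.

Lemma prod_sub_prim_root n w u y : n.-primitive_root w -> u != 0 ->
  \prod_(i < n) (y - u * w ^+ i) = y ^+ n - u ^+ n.
Proof.
move=> pw u0.
have := congr1 (horner^~ (y / u)) (factor_Xn_sub_1 pw).
rewrite horner_prod big_mkord !hornerE => prodE.
rewrite (eq_bigr (fun i : 'I_n => u * ('X - (w ^+ i)%:P).[y / u])); last first.
  by move=> i _; rewrite hornerXsubC mulrBr mulrCA divff // mulr1.
by rewrite prodrMl card_ord prodE mulrBr mulr1 exprMn exprVn mulrCA divff ?mulr1 ?expf_neq0.
Qed.

Lemma prod_joukowski_sub n w u y : n.-primitive_root w -> u != 0 -> y != 0 ->
  \prod_(i < n) (joukowski y - joukowski (u * w ^+ i))
  = joukowski (y ^+ n) - joukowski (u ^+ n).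
Proof.
move=> pw u0 y0; have w0 : w != 0 by rewrite (prim_root_eq0 pw) -lt0n (prim_order_gt0 pw).
rewrite (eq_bigr (fun i : 'I_n => (y - u * w ^+ i) * (y - u^-1 * w^-1 ^+ i) * y^-1)).
  rewrite !big_split /= !prod_sub_prim_root ?invr_eq0 ?prim_rootV //.
  by rewrite prodr_const card_ord !exprVn joukowski_sub ?expf_neq0.
by move=> i _; rewrite joukowski_sub ?mulf_neq0 ?expf_neq0 // invfM exprVn mulrC.
Qed.

End Joukowski.

Section ClosedField.
Variable F : closedFieldType.

Lemma poly_eq0_closed (p : {poly F}) : (forall x, p.[x] = 0) -> p = 0.
Proof.
move=> p_vanish; apply/eqP; apply: contraT => p_neq0.
have [x /rootP] : exists x, root (p * 'X - 1) x.
  apply/closed_rootP; rewrite size_addl size_mulX //.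
    by rewrite eqSS size_poly_eq0.
  by rewrite size_polyN size_poly1 ltnS lt0n size_poly_eq0.
by rewrite !hornerE p_vanish mul0r sub0r => /eqP; rewrite oppr_eq0 oner_eq0.
Qed.

Lemma joukowski_surj (x : F) : exists2 y, y != 0 & joukowski y = x.
Proof.
have [y /rootP] : exists y, root (('X - x%:P) * 'X + 1) y.
  apply/closed_rootP; rewrite size_addl size_mulX ?polyXsubC_eq0 ?size_XsubC //.
  by rewrite size_poly1.
rewrite !hornerE => root_y.
have y0 : y != 0.
  by apply/eqP => y0; move: root_y; rewrite y0 mulr0 add0r => /eqP; rewrite oner_eq0.
exists y => //; apply: (mulIf y0); rewrite mulrDl mulVf //.
by apply/eqP; rewrite -subr_eq0 -root_y; apply/eqP; ring.
Qed.

Lemma prod_XsubC_joukowski n (w u v : F) :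
    n.-primitive_root w -> u != 0 -> v != 0 ->
  \prod_(i < n) ('X - (joukowski (u * w ^+ i))%:P) + (joukowski (u ^+ n))%:P
  = \prod_(i < n) ('X - (joukowski (v * w ^+ i))%:P) + (joukowski (v ^+ n))%:P.
Proof.
move=> pw u0 v0; apply/eqP; rewrite -subr_eq0; apply/eqP; apply: poly_eq0_closed => x.
have [y y0 <-] := joukowski_surj x.
rewrite hornerD hornerN !hornerD !hornerC !horner_prod.
under eq_bigr do rewrite hornerXsubC.
under [in X in _ - (X + _)]eq_bigr do rewrite hornerXsubC.
by rewrite !prod_joukowski_sub //; ring.
Qed.
End ClosedField.

Lemma prim_root_dprime (F : fieldType) (q : F) d :
  d.-primitive_root q -> (dprime d).-primitive_root (q ^+ 2).
Proof.
move=> pq; have := exp_prim_root pq 2; congr (_.-primitive_root _).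
rewrite /dprime; case: ifP => [odd_d | even_d].
  by move: odd_d; rewrite -coprime2n => /eqP ->; rewrite divn1.
have /gcdn_idPl -> : (2 %| d)%N by rewrite dvdn2 even_d.
by rewrite divn2.
Qed.

Lemma vthetaE (F : fieldType) (q nu : F) i :
  vtheta q nu i = joukowski (nu^-1 * (q ^+ 2) ^+ i).
Proof. by rewrite /vtheta /joukowski invfM invrK exprM mulrC. Qed.

Lemma thetaE (F : fieldType) (q a lam : F) i :
  theta q a lam i = joukowski (a / lam * (q ^+ 2) ^+ i).
Proof. by rewrite /theta /joukowski !invfM invrK exprM [_ * _^-1]mulrC. Qed.

Lemma prod_XsubC_vtheta (F : closedFieldType) n (q a lam delta nu : F) :
    n.-primitive_root (q ^+ 2) -> a != 0 -> lam != 0 -> nu != 0 ->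
    nu ^+ n + nu ^- n = delta + a ^+ n * lam ^- n + a ^- n * lam ^+ n ->
  \prod_(i < n) ('X - (vtheta q nu i)%:P)
    = \prod_(i < n) ('X - (theta q a lam i)%:P) - delta%:P.
Proof.
move=> pw a0 lam0 nu0 nu_eq.
have jnu : joukowski (nu^-1 ^+ n) = delta + joukowski ((a / lam) ^+ n).
  rewrite exprVn joukowskiV /joukowski nu_eq exprMn exprVn invfM invrK; ring.
apply: (addIr (joukowski (nu^-1 ^+ n))%:P).
under eq_bigr do rewrite vthetaE.
under [in RHS]eq_bigr do rewrite thetaE.
rewrite (prod_XsubC_joukowski pw (invr_neq0 nu0) (mulf_neq0 a0 (invr_neq0 lam0))).
by rewrite jnu (polyCD delta) addrA subrK.
Qed.

Theorem lemma8p3 (F : closedFieldType) (q : F) (d : nat)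
  (hq : d.-primitive_root q) (hd : [&& d != 1%N, d != 2%N & d != 4%N]%N)
  (a b c lam delta nu : F)
  (ha : a != 0) (hb : b != 0) (hc : c != 0) (hlam : lam != 0) (hnu : nu != 0)
  (hnu_eq : nu ^+ dprime d + nu ^- dprime d
            = delta + a ^+ dprime d * lam ^- dprime d + a ^- dprime d * lam ^+ dprime d) :
  char_poly (AonW q a lam delta (dprime d))
    = \prod_(i < dprime d) ('X - (vtheta q nu i)%:P)
  /\ \prod_(i < dprime d) ('X - (vtheta q nu i)%:P)
    = \prod_(i < dprime d) ('X - (theta q a lam i)%:P) - delta%:P.
Proof.
have pw := prim_root_dprime hq.
have prod_vtheta := prod_XsubC_vtheta pw ha hlam hnu hnu_eq.
split => //; rewrite prod_vtheta -(prednK (prim_order_gt0 pw)).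
exact: char_poly_bidiag_cycle.
Qed.
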